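(* Let $M>0$. Then: (i) $\beta_M(x)\le0$ for every $x\in S$; (ii) if $\bar x\in S$ is not a stationary point, then $\beta_M(\bar x)<0$ and $d_M(\bar x)\ne0$; (iii) if $\beta_M(\bar x)=0$ for some $\bar x\in S$, then $\bar x$ is a stationary point.
   Context: Setting: $S\subseteq\mathbb{R}^n$ is a nonempty closed convex set with nonempty interior, $K\subset\mathbb{R}^p$ is a pointed closed convex cone, $f=(f_1,\dots,f_p)^\top:S\to\mathbb{R}^p$ is twice continuously differentiable, with Jacobian $Jf(x)$ ($p\times n$). With $K^*=\{u:\langle u,\xi\rangle\ge0\ \forall\xi\in K\}$, there is a finite set $C\subset K^*$ of unit vectors with $\mathrm{cone}(\mathrm{conv}(C))=K^*$ (so $\mathrm{int}(K)=\{u:\langle u,\xi\rangle>0\ \forall\xi\in C\}$). A point $\bar x\in S$ is stationary (Pareto critical) if $R(Jf(\bar x))\cap(-\mathrm{int}(K))=\emptyset$, where $R(Jf(\bar x))$ is the range of $Jf(\bar x)$. Notation: $\langle Jf(x)d,\xi\rangle=\sum_i\xi_i\nabla f_i(x)^\top d$, $\langle d^\top\nabla^2f(x)d,\xi\rangle=\sum_i\xi_i d^\top\nabla^2 f_i(x)d$. For $x\in S$: $q_M(x,d)=\max_{\xi\in C}\{\langle Jf(x)d,\xi\rangle+\tfrac12\langle d^\top\nabla^2f(x)d,\xi\rangle\}+\tfrac M6\|d\|^3$, $d_M(x)$ a (fixed) global minimizer of $q_M(x,\cdot)$ over $\mathbb{R}^n$, and $\beta_M(x)=\min_{d\in\mathbb{R}^n}q_M(x,d)$.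 *)

From mathcomp Require Import all_boot all_order all_algebra.
From mathcomp Require Import all_classical all_reals all_analysis.
Import Order.TTheory GRing.Theory Num.Theory.
Import numFieldNormedType.Exports.

Set Implicit Arguments.
Unset Strict Implicit.
Unset Printing Implicit Defensive.

Local Open Scope ring_scope.
Local Open Scope classical_set_scope.

Definition dotv (R : realType) (k : nat) (u v : 'rV[R]_k) : R :=
  \sum_(i < k) u ord0 i * v ord0 i.

Definition enorm (R : realType) (k : nat) (v : 'rV[R]_k) : R :=
  Num.sqrt (dotv v v).

Definition is_cone (R : realType) (k : nat) (K : set 'rV[R]_k) : Prop :=
  K 0 /\ forall x (t : R), K x -> 0 <= t -> K (t *: x).

Definition pointed (R : realType) (k : nat) (K : set 'rV[R]_k) : Prop :=
  forall x, K x -> K (- x) -> x = 0.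

Definition dual_cone (R : realType) (k : nat) (K : set 'rV[R]_k) : set 'rV[R]_k :=
  [set u | forall xi, K xi -> 0 <= dotv u xi].

Definition conv_seq (R : realType) (k : nat) (C : seq 'rV[R]_k) : set 'rV[R]_k :=
  [set y | exists t : 'I_(size C) -> R,
     [/\ forall i, 0 <= t i, \sum_(i < size C) t i = 1
       & y = \sum_(i < size C) t i *: C`_i]].

Definition cone_of (R : realType) (k : nat) (A : set 'rV[R]_k) : set 'rV[R]_k :=
  [set y | exists (lam : R) a, [/\ 0 <= lam, A a & y = lam *: a]].

Definition C2_on (R : realType) (n p : nat) (S : set 'rV[R]_n)
    (f : 'rV[R]_n -> 'rV[R]_p) : Prop :=
  exists U : set 'rV[R]_n, [/\ open U, S `<=` U,
    forall x, U x -> differentiable f x /\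
      forall v : 'rV[R]_n, differentiable (fun y => 'd f y v) x
  & forall (v w : 'rV[R]_n) x, U x ->
      {for x, continuous (fun y => 'd (fun z => 'd f z v) y w)}].

Definition Jf (R : realType) (n p : nat) (f : 'rV[R]_n -> 'rV[R]_p)
    (x d : 'rV[R]_n) : 'rV[R]_p := 'd f x d.

(* the vector (d^T ∇^2 f_i(x) d)_{i=1..p} *)
Definition hess_quad (R : realType) (n p : nat) (f : 'rV[R]_n -> 'rV[R]_p)
    (x d : 'rV[R]_n) : 'rV[R]_p := 'd (fun y => 'd f y d) x d.

(* maximum of a nonempty finite sequence of reals (0 for the empty one,
   a case excluded by the standing hypotheses) *)
Definition seqmax (R : realType) (s : seq R) : R :=
  if s is a :: s' then foldr Num.max a s' else 0.

Definition qM (R : realType) (n p : nat) (M : R) (f : 'rV[R]_n -> 'rV[R]_p)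
    (C : seq 'rV[R]_p) (x d : 'rV[R]_n) : R :=
  seqmax [seq dotv (Jf f x d) xi + 2^-1 * dotv (hess_quad f x d) xi | xi <- C]
  + M / 6 * enorm d ^+ 3.

Definition betaM (R : realType) (n p : nat) (M : R) (f : 'rV[R]_n -> 'rV[R]_p)
    (C : seq 'rV[R]_p) (dM : 'rV[R]_n -> 'rV[R]_n) (x : 'rV[R]_n) : R :=
  qM M f C x (dM x).

Definition stationary (R : realType) (n p : nat) (f : 'rV[R]_n -> 'rV[R]_p)
    (K : set 'rV[R]_p) (x : 'rV[R]_n) : Prop :=
  ~ exists d : 'rV[R]_n, (interior K) (- Jf f x d).

From mathcomp Require Import all_boot all_order all_algebra.
From mathcomp Require Import all_classical all_reals all_analysis.
From mathcomp Require Import lra.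
Import Order.TTheory GRing.Theory Num.Theory.
Import numFieldNormedType.Exports.

Set Implicit Arguments.
Unset Strict Implicit.
Unset Printing Implicit Defensive.

Local Open Scope ring_scope.
Local Open Scope classical_set_scope.

(* Since q_M(x, 0) = 0, beta_M <= 0 always.  If x is not stationary, some d
   has -Jf(x)d in int(K), so <Jf(x)d, xi> < 0 for every xi in C (a nonzero
   element of the dual cone is positive on int(K)).  Along the ray t d the
   model is then max_xi (t a_xi + t^2 b_xi / 2) + c t^3 with all a_xi < 0,
   which is negative for small t > 0; hence beta_M(x) < 0 and d_M(x) <> 0.
   Part (iii) is the contrapositive of (ii). *)

Section Seqmax.
Variable R : realType.
Implicit Types (s : seq R) (y m : R).

Lemma seqmax_ge s y : y \in s -> y <= seqmax s.
Proof.
case: s => [//|a s] /=; elim: s y => [|b s IH] y /=.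
  by rewrite mem_seq1 => /eqP ->.
rewrite !inE le_max => /or3P[/eqP-> | /eqP-> | ys].
- by apply/orP; right; apply: IH; rewrite mem_head.
- by rewrite lexx.
- by apply/orP; right; apply: IH; rewrite inE ys orbT.
Qed.

Lemma seqmax_mem s : s != [::] -> seqmax s \in s.
Proof.
case: s => [//|a s] _ /=; elim: s => [|b s IH] /=; first exact: mem_head.
have [_|_] := leP b (foldr Num.max a s); last by rewrite !inE eqxx orbT.
by move: IH; rewrite !inE => /orP[->|->]; rewrite ?orbT.
Qed.

Lemma seqmax_lt s m : s != [::] -> (forall y, y \in s -> y < m) -> seqmax s < m.
Proof. by move=> s0 /(_ _ (seqmax_mem s0)). Qed.

Lemma seqmax_eq0 s : (forall y, y \in s -> y = 0) -> seqmax s = 0.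
Proof. by case: (eqVneq s [::]) => [-> //|s0] /(_ _ (seqmax_mem s0)). Qed.

End Seqmax.

Section InnerProduct.
Variables (R : realType) (k : nat).
Implicit Types (u v w : 'rV[R]_k) (t : R).

Lemma dotvC u v : dotv u v = dotv v u.
Proof. by apply: eq_bigr => i _; rewrite mulrC. Qed.

Lemma dotv0l v : dotv 0 v = 0.
Proof. by rewrite /dotv big1 // => i _; rewrite mxE mul0r. Qed.

Lemma dotvZl t u v : dotv (t *: u) v = t * dotv u v.
Proof. by rewrite /dotv mulr_sumr; apply: eq_bigr => i _; rewrite mxE mulrA. Qed.

Lemma dotvZr t u v : dotv u (t *: v) = t * dotv u v.
Proof. by rewrite dotvC dotvZl dotvC. Qed.

Lemma dotvBr u v w : dotv u (v - w) = dotv u v - dotv u w.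
Proof.
rewrite /dotv -sumrB; apply: eq_bigr => i _.
by rewrite !mxE mulrBr.
Qed.

Lemma dotvNr u v : dotv u (- v) = - dotv u v.
Proof. by rewrite -scaleN1r dotvZr mulN1r. Qed.

Lemma dotvv_ge0 u : 0 <= dotv u u.
Proof. by rewrite sumr_ge0 // => i _; rewrite -expr2 sqr_ge0. Qed.

Lemma dotvv_gt0 u : u != 0 -> 0 < dotv u u.
Proof.
move=> u0; rewrite lt_def dotvv_ge0 andbT; apply: contra u0 => /eqP.
move=> /psumr_eq0P uu0; apply/eqP/rowP => i; rewrite mxE.
by apply/eqP; rewrite -sqrf_eq0 expr2 uu0 // => j _; rewrite -expr2 sqr_ge0.
Qed.

Lemma enorm0 : enorm (0 : 'rV[R]_k) = 0.
Proof. by rewrite /enorm dotv0l sqrtr0. Qed.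

Lemma enormZ t u : enorm (t *: u) = `|t| * enorm u.
Proof. by rewrite /enorm dotvZl dotvZr mulrA -expr2 sqrtrM ?sqr_ge0 ?sqrtr_sqr. Qed.

End InnerProduct.

Lemma dual_cone_interior_gt0 (R : realType) (k : nat) (K : set 'rV[R]_k)
    (c u : 'rV[R]_k) :
  dual_cone K c -> c != 0 -> interior K u -> 0 < dotv c u.
Proof.
move=> Kc c0 /nbhs_ballP [e /= e0 uK].
pose eps := e / (`|c| + 1).
have c1_gt0 : 0 < `|c| + 1 by rewrite ltr_pwDr.
have eps_gt0 : 0 < eps by rewrite divr_gt0.
have : K (u - eps *: c).
  apply: uK; rewrite -ball_normE /ball_ /= opprB addrC subrK normrZ.
  rewrite gtr0_norm // /eps mulrAC ltr_pdivrMr // ltr_pM2l //; lra.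
move=> /Kc; rewrite dotvBr dotvZr subr_ge0; apply: lt_le_trans.
by rewrite mulr_gt0 ?dotvv_gt0.
Qed.

Lemma cubic_model_lt0 (R : realType) (T : eqType) (s : seq T)
    (a b : T -> R) (c : R) :
  s != [::] -> 0 <= c -> (forall i, i \in s -> a i < 0) ->
  exists2 t, 0 < t &
    seqmax [seq t * a i + 2^-1 * (t ^+ 2 * b i) | i <- s] + c * t ^+ 3 < 0.
Proof.
move=> s0 c_ge0 a_lt0.
have ms0 (g : T -> R) : [seq g i | i <- s] != [::] by case: (s) s0.
pose al := - seqmax [seq a i | i <- s].
pose B := Num.max 0 (seqmax [seq 2^-1 * b i | i <- s]).
have al_gt0 : 0 < al.
  by rewrite oppr_gt0 seqmax_lt // => _ /mapP[i si ->]; apply: a_lt0.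
have B_ge0 : 0 <= B by rewrite le_max lexx.
pose t := al / (al + B + c).
have den_gt0 : 0 < al + B + c by rewrite -addrA ltr_wpDr // addr_ge0.
have t_gt0 : 0 < t by rewrite divr_gt0.
have t_le1 : t <= 1 by rewrite ler_pdivrMr // mul1r -addrA lerDl addr_ge0.
have tBc : t * (B + c) < al by rewrite mulrAC ltr_pdivrMr // ltr_pM2l //; lra.
exists t => //; rewrite -ltrBrDr sub0r seqmax_lt // => _ /mapP[i si ->].
have ha : a i <= - al by rewrite opprK seqmax_ge // map_f.
have hb : 2^-1 * b i <= B.
  by rewrite le_max seqmax_ge ?orbT // (map_f (fun i => 2^-1 * b i)).
(* t a + t^2 b / 2 + c t^3 <= t (t (B + c) - al) < 0, using t <= 1. *)
have h1 : t * a i <= t * (- al) by rewrite ler_wpM2l // ltW.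
have h2 : 2^-1 * (t ^+ 2 * b i) <= t ^+ 2 * B.
  by rewrite mulrCA ler_wpM2l // exprn_ge0 // ltW.
have h3 : c * t ^+ 3 <= c * t ^+ 2.
  by rewrite ler_wpM2l // exprSr ler_piMr // exprn_ge0 // ltW.
have h4 : t * (t * (B + c)) < t * al by rewrite ltr_pM2l.
rewrite !expr2 exprS expr2 in h2 h3 *; nra.
Qed.

Section ModelDecrease.
Variables (R : realType) (n p : nat) (M : R) (f : 'rV[R]_n -> 'rV[R]_p).
Variables (C : seq 'rV[R]_p) (x : 'rV[R]_n).

Lemma qM0 : qM M f C x 0 = 0.
Proof.
rewrite /qM enorm0 expr0n mulr0 addr0 seqmax_eq0 // => _ /mapP[xi _ ->].
have -> : Jf f x 0 = 0 by rewrite /Jf linear0.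
have -> : hess_quad f x 0 = 0 by rewrite /hess_quad linear0.
by rewrite dotv0l mulr0 addr0.
Qed.

Lemma JfZ d t : Jf f x (t *: d) = t *: Jf f x d.
Proof. exact: linearZ. Qed.

Lemma hess_quadZ d t : differentiable (fun y => 'd f y d) x ->
  hess_quad f x (t *: d) = t ^+ 2 *: hess_quad f x d.
Proof.
move=> dg; rewrite /hess_quad; set g := fun y => 'd f y d.
have -> : (fun y => 'd f y (t *: d)) = t *: g by apply/funext => y; exact: linearZ.
have gZ : 'd g x (t *: d) = t *: 'd g x d by exact: linearZ.
apply: etrans (congr1 (fun L => L (t *: d)) (diffZ t dg)) _.
by apply: etrans (congr1 (fun v => t *: v) gZ) _; rewrite scalerA -expr2.
Qed.

Lemma qM_ray d t : 0 <= t -> differentiable (fun y => 'd f y d) x ->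
  qM M f C x (t *: d) =
  seqmax [seq t * dotv (Jf f x d) xi + 2^-1 * (t ^+ 2 * dotv (hess_quad f x d) xi)
         | xi <- C] + M / 6 * enorm d ^+ 3 * t ^+ 3.
Proof.
move=> t_ge0 dg; rewrite /qM JfZ hess_quadZ // enormZ ger0_norm // exprMn.
congr (seqmax _ + _); last by rewrite mulrA mulrAC.
by apply/eq_map => xi; congr (_ + 2^-1 * _); exact: dotvZl.
Qed.

Lemma qM_descent d : 0 <= M -> C != [::] ->
  differentiable (fun y => 'd f y d) x ->
  (forall xi, xi \in C -> dotv (Jf f x d) xi < 0) ->
  exists2 t, 0 < t & qM M f C x (t *: d) < 0.
Proof.
move=> M_ge0 C0 df Jd_lt0.
have c_ge0 : 0 <= M / 6 * enorm d ^+ 3 by rewrite !mulr_ge0 ?exprn_ge0 ?sqrtr_ge0.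
have [t t_gt0 lt0] := cubic_model_lt0 (dotv (hess_quad f x d)) C0 c_ge0 Jd_lt0.
by exists t; rewrite // qM_ray // ltW.
Qed.

End ModelDecrease.

Lemma cone_conv_dual_neq_nil (R : realType) (k : nat) (K : set 'rV[R]_k)
    (C : seq 'rV[R]_k) :
  cone_of (conv_seq C) = dual_cone K -> C != [::].
Proof.
move=> KC; have : dual_cone K 0 by move=> xi _; rewrite dotv0l.
rewrite -KC => -[_ [_ [_ [w [_ w1 _]] _]]].
by case: C w w1 {KC} => // w; rewrite big_ord0 => /esym/eqP; rewrite oner_eq0.
Qed.

Theorem theorem3p1 (R : realType) (n p : nat)
    (S : set 'rV[R]_n) (K : set 'rV[R]_p) (C : seq 'rV[R]_p)
    (f : 'rV[R]_n -> 'rV[R]_p) (M : R) (dM : 'rV[R]_n -> 'rV[R]_n) :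
  (* S: nonempty closed convex set with nonempty interior *)
  closed S -> convex_set S -> (exists x, (interior S) x) ->
  (* K: pointed closed convex cone *)
  is_cone K -> convex_set K -> closed K -> pointed K ->
  (* C: finite set of unit vectors of K^* with cone(conv(C)) = K^* *)
  (forall c, c \in C -> enorm c = 1) ->
  (forall c, c \in C -> dual_cone K c) ->
  cone_of (conv_seq C) = dual_cone K ->
  (* f twice continuously differentiable on S *)
  C2_on S f ->
  0 < M ->
  (* d_M(x) is a global minimizer of q_M(x, .) over R^n *)
  (forall x, S x -> forall d, qM M f C x (dM x) <= qM M f C x d) ->
  [/\ (forall x, S x -> betaM M f C dM x <= 0),
      (forall xb, S xb -> ~ stationary f K xb ->
         betaM M f C dM xb < 0 /\ dM xb != 0)
    & (forall xb, S xb -> betaM M f C dM xb = 0 -> stationary f K xb)].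
Proof.
move=> _ _ _ _ _ _ _ C_unit C_dual KC [U [_ SU f_diff _]] M_gt0 dM_min.
have C0 := cone_conv_dual_neq_nil KC.
have beta_lt0 xb : S xb -> ~ stationary f K xb -> betaM M f C dM xb < 0.
  move=> Sxb /contrapT[d Jd_int].
  have Jd_lt0 xi : xi \in C -> dotv (Jf f xb d) xi < 0.
    move=> Cxi; rewrite dotvC -oppr_gt0 -dotvNr.
    apply: dual_cone_interior_gt0 Jd_int; first exact: C_dual.
    by apply: contra_eqN (C_unit _ Cxi) => /eqP->; rewrite enorm0 eq_sym oner_eq0.
  have [t _ qt_lt0] := qM_descent (ltW M_gt0) C0 ((f_diff _ (SU _ Sxb)).2 d) Jd_lt0.
  exact: le_lt_trans (dM_min _ Sxb _) qt_lt0.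
split=> [x Sx | xb Sxb xb_ns | xb Sxb beta0].
- by rewrite /betaM -(qM0 M f C x) dM_min.
- split; first exact: beta_lt0.
  by apply: contra_ltN (beta_lt0 _ Sxb xb_ns) => /eqP dM0; rewrite /betaM dM0 qM0.
- by apply: contrapT => /(beta_lt0 _ Sxb); rewrite beta0 ltxx.
Qed.
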